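(* Let $r\in\mathbb{N}$ and let $H=\begin{bmatrix}A&B\\C&D\end{bmatrix}$ with $A,B,C,D\in\mathbb{R}^{r\times r}$, where $A$ and $D$ are upper-triangular with diagonal entries $a_1,\dots,a_r$ and $d_1,\dots,d_r$ respectively, and $B$ and $C$ are diagonal with diagonal entries $b_1,\dots,b_r$ and $c_1,\dots,c_r$ respectively. If for every $i\in\{1,\dots,r\}$ the $2\times2$ matrix $\begin{bmatrix}a_i&b_i\\c_i&d_i\end{bmatrix}$ is stable, then $H$ is stable.
   Context: A square matrix is stable if all its eigenvalues have modulus strictly less than $1$. *)

From HB Require Import structures.
From mathcomp Require Import all_boot all_order all_algebra.
From mathcomp Require Import reals.
From mathcomp Require Export complex.
Set Implicit Arguments. Unset Strict Implicit. Unset Printing Implicit Defensive.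
Import Order.TTheory GRing.Theory Num.Theory.
Local Open Scope ring_scope.
Local Open Scope complex_scope.

Definition stable (R : realType) (n : nat) (M : 'M[R]_n) : Prop :=
  forall z : R[i], eigenvalue (map_mx (fun x : R => x%:C) M) z -> `|z| < 1.

Definition mx2 (R : realType) (a b c d : R) : 'M[R]_2 :=
  \matrix_(i < 2, j < 2)
    if i == 0 :> nat then (if j == 0 :> nat then a else b)
    else (if j == 0 :> nat then c else d).

From HB Require Import structures.
From mathcomp Require Import all_boot all_order all_algebra.
From mathcomp Require Import reals complex.
Import Order.TTheory GRing.Theory Num.Theory.
Local Open Scope ring_scope.
Local Open Scope complex_scope.

(* Let (x, y) be a (row) eigenvector of H for the eigenvalue z and let j be the
   first index with (x_j, y_j) <> 0.  Since A, B, C, D are upper triangular,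
   coordinate j of (x, y) H only involves x_j and y_j, so (x_j, y_j) is an
   eigenvector of [[a_j, b_j], [c_j, d_j]] for the same eigenvalue z, whence
   |z| < 1. *)

Lemma map_is_trig_mx (U V : nmodType) (f : U -> V) m n (M : 'M[U]_(m, n)) :
  f 0 = 0 -> is_trig_mx M -> is_trig_mx (map_mx f M).
Proof.
move=> f0 /is_trig_mxP M_trig.
by apply/is_trig_mxP => i j ij; rewrite mxE M_trig.
Qed.

(* [is_trig_mx] is lower triangularity, so "M is upper triangular" is
   expressed as [is_trig_mx M^T]. *)
Lemma mulmx_trigT_coef (K : pzSemiRingType) n (x : 'rV[K]_n) (M : 'M[K]_n)
    (j : 'I_n) :
  is_trig_mx M^T -> (forall i : 'I_n, (i < j)%N -> x 0 i = 0) ->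
  (x *m M) 0 j = x 0 j * M j j.
Proof.
move=> /is_trig_mxP M_trig x_lt_j.
rewrite mxE (bigD1 j) //= big1 ?addr0 // => i.
rewrite neq_ltn => /orP[ij | ji]; first by rewrite x_lt_j ?mul0r.
by have := M_trig j i ji; rewrite mxE => ->; rewrite mulr0.
Qed.

Lemma block_trigT_eigen_pivot {K : pzRingType} {r} {A B C D : 'M[K]_r}
    {x y : 'rV[K]_r} {z : K} {j : 'I_r} :
  is_trig_mx A^T -> is_trig_mx B^T -> is_trig_mx C^T -> is_trig_mx D^T ->
  row_mx x y *m block_mx A B C D = z *: row_mx x y ->
  (forall i : 'I_r, (i < j)%N -> x 0 i = 0 /\ y 0 i = 0) ->
  x 0 j * A j j + y 0 j * C j j = z * x 0 j /\
  x 0 j * B j j + y 0 j * D j j = z * y 0 j.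
Proof.
move=> A_trig B_trig C_trig D_trig.
rewrite mul_row_block scale_row_mx => /eq_row_mx[eq_x eq_y] xy_lt_j.
have x_lt_j (i : 'I_r) : (i < j)%N -> x 0 i = 0 by case/xy_lt_j.
have y_lt_j (i : 'I_r) : (i < j)%N -> y 0 i = 0 by case/xy_lt_j.
split.
- have := congr1 (fun u : 'rV_r => u 0 j) eq_x.
  by rewrite /= mxE [RHS]mxE !mulmx_trigT_coef.
- have := congr1 (fun u : 'rV_r => u 0 j) eq_y.
  by rewrite /= mxE [RHS]mxE !mulmx_trigT_coef.
Qed.

Lemma eigenvalue_mx2 (R : realType) (a b c d : R) (u v z : R[i]) :
  (u != 0) || (v != 0) ->
  u * a%:C + v * c%:C = z * u -> u * b%:C + v * d%:C = z * v ->
  eigenvalue (map_mx (fun x : R => x%:C) (mx2 a b c d)) z.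
Proof.
move=> uv_nz eq_u eq_v; apply/eigenvalueP.
exists (\row_(k < 2) if k == 0 :> nat then u else v).
  apply/rowP => k; rewrite !mxE !big_ord_recl big_ord0 !mxE /= addr0.
  by case: k => [[|[|k]] //=].
apply: contraTneq uv_nz => /rowP uv0.
by move: (uv0 0) (uv0 1); rewrite !mxE /= => -> ->; rewrite eqxx.
Qed.

Lemma eigenvalue_block_trigT {R : realType} {r} {A B C D : 'M[R]_r} {z : R[i]} :
  is_trig_mx A^T -> is_trig_mx B^T -> is_trig_mx C^T -> is_trig_mx D^T ->
  eigenvalue (map_mx (fun x : R => x%:C) (block_mx A B C D)) z ->
  exists j : 'I_r,
    eigenvalue
      (map_mx (fun x : R => x%:C) (mx2 (A j j) (B j j) (C j j) (D j j))) z.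
Proof.
set f := fun x : R => x%:C.
move=> A_trig B_trig C_trig D_trig /eigenvalueP[v].
rewrite -[v]hsubmxK map_block_mx.
set x := lsubmx v; set y := rsubmx v; clearbody x y.
move=> eigen_xy xy_nz; pose nz j := (x 0 j != 0) || (y 0 j != 0).
have zP j : ~~ nz j -> x 0 j = 0 /\ y 0 j = 0.
  by case/norP => /negPn/eqP-> /negPn/eqP->.
have [j0 nz_j0] : exists j, nz j.
  apply/existsP; apply: contraR xy_nz => /existsPn /(_ _)/zP xy0.
  rewrite row_mx_eq0; apply/andP; split; apply/eqP/rowP => j; rewrite mxE.
  - exact: (xy0 j).1.
  - exact: (xy0 j).2.
case: (@arg_minnP _ _ nz (@nat_of_ord r) nz_j0) => j nz_j min_j; exists j.
have trig_f (M : 'M[R]_r) : is_trig_mx M^T -> is_trig_mx (map_mx f M)^T.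
  by rewrite map_trmx; apply: map_is_trig_mx.
have xy_lt_j (i : 'I_r) : (i < j)%N -> x 0 i = 0 /\ y 0 i = 0.
  by move=> ij; apply/zP; apply: contraTN ij => /min_j; rewrite -leqNgt.
have [] := block_trigT_eigen_pivot (trig_f _ A_trig) (trig_f _ B_trig)
  (trig_f _ C_trig) (trig_f _ D_trig) eigen_xy xy_lt_j.
by rewrite !mxE; exact: eigenvalue_mx2.
Qed.

Theorem lemma5 (R : realType) (r : nat) (A B C D : 'M[R]_r) :
  (forall i j : 'I_r, (j < i)%N -> A i j = 0) ->
  (forall i j : 'I_r, (j < i)%N -> D i j = 0) ->
  (forall i j : 'I_r, i != j -> B i j = 0) ->
  (forall i j : 'I_r, i != j -> C i j = 0) ->
  (forall i : 'I_r, stable (mx2 (A i i) (B i i) (C i i) (D i i))) ->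
  stable (block_mx A B C D).
Proof.
move=> A_upper D_upper B_diag C_diag stable_pivots z.
have upper (M : 'M[R]_r) :
    (forall i j : 'I_r, (j < i)%N -> M i j = 0) -> is_trig_mx M^T.
  by move=> M_upper; apply/is_trig_mxP => i j ij; rewrite mxE M_upper.
have diag (M : 'M[R]_r) :
    (forall i j : 'I_r, i != j -> M i j = 0) -> is_trig_mx M^T.
  move=> M_diag; apply/is_diag_mx_is_trig; rewrite is_diag_trmx.
  by apply/is_diag_mxP => i j /M_diag.
case/(eigenvalue_block_trigT (upper _ A_upper) (diag _ B_diag) (diag _ C_diag)
        (upper _ D_upper)) => j.
exact: stable_pivots.
Qed.
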